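(* Let $G$ be a finite simple graph with $n$ vertices whose degrees, listed in non-decreasing order, are $d_1 \le d_2 \le \dots \le d_n$. Let $\lambda \ge 0$ be the largest integer such that $$\sum_{i=1}^{\lambda} \left\lceil \frac{d_i}{2} + 1 \right\rceil \le \sum_{i=\lambda+1}^{n} \left\lfloor \frac{d_i}{2} \right\rfloor,$$ where an empty sum (e.g. $\sum_{i=1}^{0}$) equals $0$. Then $\gamma_s(G) \ge n - 2\lambda$.
   Context: For a vertex $v$ of $G$, $N[v]$ denotes the closed neighbourhood of $v$ (i.e. $v$ together with its neighbours). A signed domination function of $G$ is a function $f: V(G) \to \{-1, 1\}$ such that $\sum_{x \in N[v]} f(x) \ge 1$ for every vertex $v \in V(G)$. The weight of $f$ is $f(V(G)) = \sum_{v \in V(G)} f(v)$. The signed domination number $\gamma_s(G)$ is the minimum weight of a signed domination function of $G$. *)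

From mathcomp Require Import all_boot all_order all_algebra.
Set Implicit Arguments. Unset Strict Implicit. Unset Printing Implicit Defensive.
Import Order.TTheory GRing.Theory Num.Theory.

Definition simple_graph (T : finType) (e : rel T) : Prop :=
  symmetric e /\ irreflexive e.

Definition deg (T : finType) (e : rel T) (v : T) : nat := #|[set u | e v u]|.

(* the degree sequence sorted non-decreasingly: d_1 <= ... <= d_n,
   with d_i = nth 0 (degseq e) i.-1 *)
Definition degseq (T : finType) (e : rel T) : seq nat :=
  sort leq [seq deg e v | v <- enum T].

Definition cnbhd (T : finType) (e : rel T) (v : T) : {set T} :=
  [set x | (x == v) || e v x].

(* a function V -> {-1,1} is encoded by f : {ffun T -> bool}, true |-> 1, false |-> -1 *)
Definition sgnb (b : bool) : int := if b then 1%R else (-1)%R.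

Definition weight (T : finType) (f : {ffun T -> bool}) : int :=
  (\sum_(v : T) sgnb (f v))%R.

Definition is_sdf (T : finType) (e : rel T) (f : {ffun T -> bool}) : bool :=
  [forall v : T, (1 <= \sum_(x in cnbhd e v) sgnb (f x))%R].

(* the all-ones function, which is always a signed domination function *)
Definition ones (T : finType) : {ffun T -> bool} := [ffun => true].

Definition gamma_s (T : finType) (e : rel T) : int :=
  weight (Order.arg_min (ones T) (fun f => is_sdf e f) (@weight T)).

(* the inequality defining lambda, with d_i := nth 0 ds i.-1:
   sum_{i=1}^{k} ceil(d_i/2 + 1) <= sum_{i=k+1}^{n} floor(d_i/2).
   For naturals d, ceil(d/2 + 1) = uphalf d + 1 and floor(d/2) = d./2. *)
Definition lambda_ok (ds : seq nat) (k : nat) : bool :=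
  (k <= size ds) &&
  (\sum_(1 <= i < k.+1) (uphalf (nth 0 ds i.-1) + 1)
     <= \sum_(k.+1 <= i < (size ds).+1) (nth 0 ds i.-1)./2).

From mathcomp Require Import all_boot all_order all_algebra zify.
Import Order.TTheory GRing.Theory Num.Theory.

(* Let f be a signed domination function with minus set M and plus set P.
   A vertex of M has at least ceil(d/2 + 1) neighbours in P, and a vertex of P
   has at most floor(d/2) neighbours in M; counting the M-P edges from both
   sides gives sum_M ceil(d/2 + 1) <= sum_P floor(d/2).  Replacing the degrees
   of M by the |M| smallest degrees only decreases the left side and increases
   the right one, so k = |M| satisfies the inequality defining lambda; hence
   |M| <= lambda and the weight of f, which is n - 2|M|, is at least n - 2 lambda. *)

Section SortedSums.
Variable g : nat -> nat.
Hypothesis g_homo : {homo g : x y / x <= y}.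

Lemma sum_take_cons_le {x : nat} {s : seq nat} {k : nat} :
  path leq x s -> k <= size s ->
  \sum_(y <- take k (x :: s)) g y <= \sum_(y <- take k s) g y.
Proof.
elim: s x k => [|y s IHs] x [|k] //= /andP[le_xy path_s] lt_ks.
rewrite !big_cons addnC [g y + _]addnC.
by apply: leq_add; [exact: IHs | exact: g_homo].
Qed.

Lemma sum_take_sorted_le {s t r : seq nat} :
  sorted leq s -> perm_eq s (t ++ r) ->
  \sum_(y <- take (size t) s) g y <= \sum_(y <- t) g y.
Proof.
elim: s t r => [|x s IHs] t r; first by rewrite big_nil.
move=> sorted_xs perm_xs; have sorted_s := path_sorted sorted_xs.
have : x \in t ++ r by rewrite -(perm_mem perm_xs) mem_head.
rewrite mem_cat => /orP[xt | xr].
  have perm_t := perm_to_rem xt.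
  rewrite (perm_size perm_t) (perm_big _ perm_t) /= !big_cons leq_add2l.
  apply: (IHs _ r sorted_s); rewrite -(perm_cons x).
  by apply: (perm_trans perm_xs); rewrite -cat_cons perm_cat2r.
have size_t : size t <= size s.
  rewrite -ltnS -[(size s).+1]/(size (x :: s)) (perm_size perm_xs) size_cat.
  by rewrite -addn1 leq_add2l lt0n size_eq0; apply: contraTneq xr => ->.
apply: (leq_trans (sum_take_cons_le sorted_xs size_t)).
apply: (IHs _ (rem x r) sorted_s); rewrite -(perm_cons x).
apply: (perm_trans perm_xs); apply: (@perm_trans _ (t ++ x :: rem x r)).
  by rewrite perm_cat2l perm_to_rem.
by rewrite -cat1s perm_catCA.
Qed.

End SortedSums.

Lemma big_nat_nth_take (F : nat -> nat) (s : seq nat) (k : nat) : k <= size s ->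
  \sum_(1 <= i < k.+1) F (nth 0 s i.-1) = \sum_(y <- take k s) F y.
Proof.
move=> le_ks; rewrite big_add1 /= [RHS](big_nth 0) size_takel //.
by apply: eq_big_nat => i /andP[_ lt_ik]; rewrite nth_take.
Qed.

Lemma big_nat_nth_drop (F : nat -> nat) (s : seq nat) (k : nat) :
  \sum_(k.+1 <= i < (size s).+1) F (nth 0 s i.-1) = \sum_(y <- drop k s) F y.
Proof.
rewrite big_add1 /= [RHS](big_nth 0) size_drop -{1}[k]add0n big_addn.
by apply: eq_big_nat => i _; rewrite nth_drop addnC.
Qed.

Lemma lambda_okE (s : seq nat) (k : nat) : k <= size s ->
  lambda_ok s k =
  (\sum_(y <- take k s) (uphalf y + 1) <= \sum_(y <- drop k s) y./2).
Proof.
move=> le_ks.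
rewrite /lambda_ok le_ks (big_nat_nth_take (fun y => uphalf y + 1)) //.
by rewrite (big_nat_nth_drop half).
Qed.

Lemma lambda_ok_perm (s t r : seq nat) : sorted leq s -> perm_eq s (t ++ r) ->
  \sum_(y <- t) (uphalf y + 1) <= \sum_(y <- r) y./2 ->
  lambda_ok s (size t).
Proof.
move=> sorted_s perm_s le_tr.
have le_ts : size t <= size s by rewrite (perm_size perm_s) size_cat leq_addr.
have homo_up : {homo (fun y => uphalf y + 1) : x y / x <= y}.
  by move=> x y le_xy; rewrite leq_add2r uphalf_leq.
have take_up := sum_take_sorted_le _ homo_up sorted_s perm_s.
have take_half := sum_take_sorted_le _ half_leq sorted_s perm_s.
have total_half : \sum_(y <- take (size t) s) y./2 + \sum_(y <- drop (size t) s) y./2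
                  = \sum_(y <- t) y./2 + \sum_(y <- r) y./2.
  by rewrite -!big_cat cat_take_drop (perm_big _ perm_s).
rewrite lambda_okE //; lia.
Qed.

Section SignedDomination.
Variables (T : finType) (e : rel T).
Hypothesis e_simple : simple_graph e.
Variable f : {ffun T -> bool}.

Let P := [set v | f v].
Let nbhd v := [set u | e v u].

Lemma sum_sgnb (A : {set T}) :
  (\sum_(x in A) sgnb (f x) = #|A :&: P|%:Z - #|A :\: P|%:Z)%R.
Proof.
rewrite (big_setID P) /=.
rewrite (eq_bigr (fun _ => 1%R)); last by move=> x; rewrite !inE => /andP[_ ->].
rewrite [X in (_ + X)%R](eq_bigr (fun _ => (-1)%R)); last first.
  by move=> x; rewrite !inE => /andP[/negbTE -> _].
by rewrite !sumr_const mulNrn !natz.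
Qed.

Lemma weight_sgnb : weight f = (#|P|%:Z - #|~: P|%:Z)%R.
Proof.
have -> : weight f = (\sum_(x in [set: T]) sgnb (f x))%R.
  by apply: eq_bigl => x; rewrite inE.
by rewrite sum_sgnb setTI setTD.
Qed.

Lemma sdf_nbhd_ge v : is_sdf e f ->
  (1 <= sgnb (f v) + (#|nbhd v :&: P|%:Z - #|nbhd v :\: P|%:Z))%R.
Proof.
have cnbhdE : cnbhd e v = v |: nbhd v by apply/setP => x; rewrite !inE.
have v_nbhd : v \notin nbhd v by rewrite inE (proj2 e_simple).
by move/forallP/(_ v); rewrite cnbhdE big_setU1 //= sum_sgnb.
Qed.

Lemma deg_nbhdID v : deg e v = #|nbhd v :&: P| + #|nbhd v :\: P|.
Proof. by rewrite cardsID. Qed.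

Lemma sdf_minus_nbhd v : is_sdf e f -> ~~ f v ->
  uphalf (deg e v) + 1 <= #|nbhd v :&: P|.
Proof.
move=> /(sdf_nbhd_ge v); rewrite deg_nbhdID => + /negbTE fv; rewrite fv /=.
move: #|_ :&: _| #|_ :\: _| => p m le1; lia.
Qed.

Lemma sdf_plus_nbhd v : is_sdf e f -> f v -> #|nbhd v :\: P| <= (deg e v)./2.
Proof.
move=> /(sdf_nbhd_ge v); rewrite deg_nbhdID => + fv; rewrite fv /=.
move: #|_ :&: _| #|_ :\: _| => p m le1; lia.
Qed.

Lemma card_nbhdI v (A : {set T}) : #|nbhd v :&: A| = \sum_(u in A) e v u.
Proof.
rewrite -sum1_card big_mkcond [RHS]big_mkcond /=.
by apply: eq_bigr => u _; rewrite !inE; case: (e v u); case: (u \in A).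
Qed.

Lemma sum_cut_edges :
  \sum_(v in ~: P) #|nbhd v :&: P| = \sum_(u in P) #|nbhd u :\: P|.
Proof.
under eq_bigr do rewrite card_nbhdI.
rewrite exchange_big /=; apply: eq_bigr => u _.
by rewrite setDE card_nbhdI; apply: eq_bigr => v _; rewrite (proj1 e_simple).
Qed.

Lemma sdf_minus_plus_le : is_sdf e f ->
  \sum_(v in ~: P) (uphalf (deg e v) + 1) <= \sum_(u in P) (deg e u)./2.
Proof.
move=> sdf_f; apply: (@leq_trans (\sum_(v in ~: P) #|nbhd v :&: P|)).
  by apply: leq_sum => v; rewrite !inE => fv; apply: sdf_minus_nbhd.
rewrite sum_cut_edges; apply: leq_sum => u; rewrite inE.
exact: sdf_plus_nbhd.
Qed.

Lemma lambda_ok_card_minus : is_sdf e f -> lambda_ok (degseq e) #|~: P|.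
Proof.
move=> sdf_f.
have -> : #|~: P| = size [seq deg e v | v <- enum (~: P)].
  by rewrite size_map cardE.
apply: (@lambda_ok_perm _ _ [seq deg e v | v <- enum P]).
- exact: (sort_sorted leq_total).
- rewrite perm_sort -map_cat; apply: perm_map; apply: uniq_perm.
  + exact: enum_uniq.
  + rewrite cat_uniq !enum_uniq /= andbT; apply/hasPn => x.
    by rewrite !mem_enum !inE => ->.
  + by move=> x; rewrite mem_cat !mem_enum !inE orbC orbN.
- by rewrite !big_map !big_enum; exact: sdf_minus_plus_le.
Qed.

End SignedDomination.

Lemma ones_sdf (T : finType) (e : rel T) : is_sdf e (ones T).
Proof.
apply/forallP => v; rewrite (eq_bigr (fun _ => 1%R)); last by move=> x _; rewrite ffunE.
by rewrite sumr_const natz lez_nat card_gt0; apply/set0Pn; exists v; rewrite !inE eqxx.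
Qed.

Theorem theorem6 (T : finType) (e : rel T) (lam : nat) :
  simple_graph e ->
  lambda_ok (degseq e) lam ->
  (forall k : nat, lambda_ok (degseq e) k -> k <= lam) ->
  ((#|T| : int) - 2%:Z * (lam : int) <= gamma_s e)%R.
Proof.
move=> e_simple _ lam_max; rewrite /gamma_s.
case: arg_minP => [|f sdf_f _]; first exact: ones_sdf.
have minus_le := lam_max _ (lambda_ok_card_minus _ _ e_simple _ sdf_f).
have card_PM := cardsC [set v | f v].
rewrite weight_sgnb; move: minus_le card_PM.
move: #|[set v | f v]| #|~: _| #|T| => p m n; lia.
Qed.
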